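(* Let $\Lambda=\Lambda(V^* )$, $V=\mathbb{C}^n$, and $W=\mathrm{der}(\Lambda)$ carry the gradings of type $\vec k=(k_1,\dots,k_m)$, with depths $d(\Lambda)$ and $d(W)$. (i) The grading of $\Lambda$ has depth $d(\Lambda)=1$ if and only if $\vec k=(-1,k_2,\dots,k_m)$ and $\dim U^{-1}=1$; in this case $d(W)=k_m+1$. (ii) The grading of $\Lambda$ has depth $d(\Lambda)=0$ if and only if $k_1\ge 0$. Moreover, when $d(\Lambda)=0$: $d(W)=0$ if and only if $\vec k=(0)$, and $d(W)=1$ if and only if $\vec k=(0,1)$ or $\vec k=(1)$.
   Context: Grading of type $\vec k$: a decomposition $U=V^*=U^{k_1}\oplus\cdots\oplus U^{k_m}$ with integers $k_1<\cdots<k_m$ and $n_i=\dim U^{k_i}>0$ induces $V^{-k_i}=(U^{k_i})^*$, the grading $\Lambda^p=\bigoplus_{p_1k_1+\cdots+p_mk_m=p}\Lambda^{p_1}(U^{k_1})\cdots\Lambda^{p_m}(U^{k_m})$ of $\Lambda$ (where $\Lambda^{p_i}(U^{k_i})$ denotes exterior forms of polynomial degree $p_i$ on $U^{k_i}$), and the grading $W^q=\bigoplus_{p-k_i=q}\Lambda^p\partial_{V^{-k_i}}$ of $W=\Lambda\otimes\partial_V$. A graded space $A=\bigoplus A^p$ has depth $d$ if $A^{-d}\neq0$ and $A^{p}=0$ for all $p<-d$. *)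

From mathcomp Require Import all_boot all_order all_algebra.
Set Implicit Arguments. Unset Strict Implicit. Unset Printing Implicit Defensive.
Import Order.TTheory GRing.Theory Num.Theory.
Local Open Scope ring_scope.

(* A grading of type k = (k_1 < ... < k_m) of U = V^* = C^n is the data of
   the sequence k : seq int (the degrees) and the sequence n : seq nat of
   dimensions n_i = dim U^{k_i} > 0 (so n = sum n_i).  The graded pieces of
   Lambda = Lambda(U) and W = Lambda (x) d_V are finite-dimensional complex
   vector spaces, determined up to isomorphism by their dimensions, which we
   compute from the defining direct-sum decompositions:

   Lambda^p = (+)_{p_1 k_1 + ... + p_m k_m = p} Lambda^{p_1}(U^{k_1}) ... Lambda^{p_m}(U^{k_m}),
   dim Lambda^{p_i}(U^{k_i}) = 'C(n_i, p_i)  (zero when p_i > n_i).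

   Tuples (p_1,...,p_m) range over p_i <= max_j n_j, which loses nothing since
   'C(n_i,p_i) = 0 for p_i > n_i. *)

Definition nmax (n : seq nat) : nat := (\max_(x <- n) x)%N.

Definition dimLam (k : seq int) (n : seq nat) (p : int) : nat :=
  (\sum_(f : {ffun 'I_(size k) -> 'I_(nmax n).+1}
          | ((\sum_(i < size k) (f i : nat)%:Z * k`_i)%R == p))
     \prod_(i < size k) 'C(nth 0%N n i, f i))%N.

(* W^q = (+)_{i, p - k_i = q} Lambda^p d_{V^{-k_i}}, and d_{V^{-k_i}} has
   dimension dim V^{-k_i} = n_i. *)
Definition dimW (k : seq int) (n : seq nat) (q : int) : nat :=
  (\sum_(i < size k) dimLam k n (q + k`_i) * nth 0%N n i)%N.

Definition has_depth (dimA : int -> nat) (d : int) : Prop :=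
  dimA (- d) <> 0%N /\ forall p : int, p < - d -> dimA p = 0%N.

From mathcomp Require Import all_boot all_order all_algebra.
From mathcomp Require Import lra zify.
Import Order.TTheory GRing.Theory Num.Theory.
Local Open Scope ring_scope.

(* The lowest nonzero degree of Lambda is sum_i n_i min(k_i, 0), reached by
   the product of all generators of negative degree (binomials vanish beyond
   p_i = n_i); so d(Lambda) = - sum_i n_i min(k_i, 0).  Since
   W^q = (+)_i Lambda^{q + k_i} d_{V^{-k_i}}, the lowest degree of W is reached
   with the largest k_i = k_m, whence d(W) = k_m + d(Lambda).  Both parts of
   the lemma then reduce to arithmetic on a strictly increasing list of
   integers. *)

Definition lowest_degree (k : seq int) (n : seq nat) : int :=
  \sum_(i < size k) (nth 0%N n i)%:Z * Num.min k`_i 0.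

Lemma nth_le_nmax (n : seq nat) (i : nat) : (nth 0%N n i <= nmax n)%N.
Proof.
have [/(mem_nth 0%N) ni|/(nth_default 0%N) -> //] := ltnP i (size n).
exact: (leq_bigmax_seq (F := id)).
Qed.

Lemma dimLam_lt_lowest (k : seq int) (n : seq nat) (p : int) :
  p < lowest_degree k n -> dimLam k n p = 0%N.
Proof.
move=> p_low; rewrite /dimLam big1 // => f /eqP weight_f.
have [/forallP f_le_n|] := boolP [forall i, (f i <= nth 0%N n i)%N].
  suff: lowest_degree k n <= p by rewrite leNgt p_low.
  rewrite -weight_f; apply: ler_sum => i _.
  have := f_le_n i; rewrite -(lez_nat (f i)).
  have [k_ge0|k_lt0] := leP 0 k`_i.
    by rewrite mulr0 => _; rewrite mulr_ge0.
  by move=> f_le; rewrite ler_wnM2r // ltW.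
rewrite negb_forall => /existsP [i]; rewrite -ltnNge => n_lt_f.
by rewrite (bigD1 i) //= bin_small // mul0n.
Qed.

Lemma dimLam_lowest_neq0 (k : seq int) (n : seq nat) :
  dimLam k n (lowest_degree k n) <> 0%N.
Proof.
pose top : {ffun 'I_(size k) -> 'I_(nmax n).+1} :=
  [ffun i : 'I_(size k) => inord (if k`_i < 0 then nth 0%N n i else 0%N)].
have topE i : (top i : nat) = if k`_i < 0 then nth 0%N n i else 0%N.
  by rewrite ffunE inordK // ltnS; case: ifP => // _; exact: nth_le_nmax.
rewrite /dimLam (bigD1 top) /=; last first.
  apply/eqP/eq_bigr => i _; rewrite topE.
  by have [_|_] := ltP k`_i 0; rewrite ?mul0r ?mulr0.
suff -> : (\prod_(i < size k) 'C(nth 0%N n i, top i) = 1)%N by [].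
by apply: big1 => i _; rewrite topE; case: ifP; rewrite ?binn ?bin0.
Qed.

Lemma has_depth_lowest (D : int -> nat) (m d : int) :
  (forall p, p < m -> D p = 0%N) -> D m <> 0%N -> has_depth D d <-> m = - d.
Proof.
move=> D_lt_m Dm_neq0; rewrite /has_depth.
split=> [[Dd_neq0 D_lt_d]|<-]; last by split=> // p /D_lt_m.
have: ~~ (m < - d) by apply/negP => /D_lt_d.
have: ~~ (- d < m) by apply/negP => /D_lt_m.
rewrite -!leNgt => m_le_negd negd_le_m.
by apply/eqP; rewrite eq_le m_le_negd negd_le_m.
Qed.

Lemma has_depth_dimLam (k : seq int) (n : seq nat) (d : int) :
  has_depth (dimLam k n) d <-> lowest_degree k n = - d.
Proof.
exact: has_depth_lowest (@dimLam_lt_lowest k n) (@dimLam_lowest_neq0 k n).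
Qed.

Lemma sorted_nth_le_last (s : seq int) (i : nat) :
  sorted <%R s -> (i < size s)%N -> s`_i <= last 0 s.
Proof.
move=> /(sub_sorted (@ltW _ _)) s_sorted i_lt; rewrite -nth_last.
have s_gt0 : (0 < size s)%N by exact: leq_ltn_trans i_lt.
apply: (sorted_leq_nth le_trans lexx) => //; rewrite ?inE ?prednK //.
by rewrite -ltnS prednK.
Qed.

Lemma has_depth_dimW (k : seq int) (n : seq nat) (dL d : int) :
  (0 < size k)%N -> size n = size k -> all (fun x => 0 < x)%N n ->
  sorted <%R k -> has_depth (dimLam k n) dL ->
  has_depth (dimW k n) d <-> last 0 k + dL = d.
Proof.
move=> k_gt0 n_sz n_pos k_sorted /has_depth_dimLam low_eq.
suff -> : has_depth (dimW k n) d <-> lowest_degree k n - last 0 k = - d.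
  by rewrite low_eq; split=> ?; lra.
apply: has_depth_lowest => [p p_lt|].
  rewrite /dimW big1 // => i _; rewrite dimLam_lt_lowest ?mul0n //.
  have := @sorted_nth_le_last k i k_sorted (ltn_ord i); lra.
have last_lt : ((size k).-1 < size k)%N by rewrite ltn_predL.
rewrite /dimW (bigD1 (Ordinal last_lt)) //= nth_last subrK.
have n_last_gt0 : (0 < nth 0%N n (size k).-1)%N.
  by apply: (allP n_pos); rewrite mem_nth // n_sz.
move/eqP; rewrite addn_eq0 muln_eq0 (negbTE (lt0n_neq0 n_last_gt0)) orbF.
by case/andP=> /eqP /dimLam_lowest_neq0.
Qed.

Lemma lowest_degree_cons (k0 : int) (k : seq int) (n0 : nat) (n : seq nat) :
  lowest_degree (k0 :: k) (n0 :: n) = n0%:Z * Num.min k0 0 + lowest_degree k n.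
Proof. by rewrite /lowest_degree /= big_ord_recl. Qed.

Lemma lowest_degree_le0 (k : seq int) (n : seq nat) : lowest_degree k n <= 0.
Proof. by apply: sumr_le0 => i _; rewrite mulr_ge0_le0 // ge_min lexx orbT. Qed.

Lemma lowest_degree_ge0 (k : seq int) (n : seq nat) :
  {in k, forall x, 0 <= x} -> lowest_degree k n = 0.
Proof.
move=> k_ge0; apply: big1 => i _.
by rewrite min_r ?mulr0 // k_ge0 // mem_nth.
Qed.

Lemma lowest_degree_cons_le (k0 : int) (k : seq int) (n0 : nat) (n : seq nat) :
  lowest_degree (k0 :: k) (n0 :: n) <= n0%:Z * Num.min k0 0.
Proof. by rewrite lowest_degree_cons gerDl lowest_degree_le0. Qed.

Lemma lowest_degree_path (k0 : int) (k : seq int) (n0 : nat) (n : seq nat) :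
  path <%R k0 k -> -1 <= k0 ->
  lowest_degree (k0 :: k) (n0 :: n) = n0%:Z * Num.min k0 0.
Proof.
move=> /(order_path_min lt_trans) /allP k0_lt k0_geN1.
rewrite lowest_degree_cons lowest_degree_ge0 ?addr0 // => x /k0_lt /= k0_lt_x.
lia.
Qed.

Lemma lowest_degree_eq0 (k0 : int) (k : seq int) (n0 : nat) (n : seq nat) :
  path <%R k0 k -> (0 < n0)%N ->
  lowest_degree (k0 :: k) (n0 :: n) = 0 <-> 0 <= k0.
Proof.
move=> k_path n0_gt0; have := lowest_degree_cons_le k0 k n0 n.
have [k0_ge0|k0_lt0] := leP 0 k0 => [_|low_le]; split=> //.
  by rewrite lowest_degree_path ?mulr0 //; lia.
have n0_ge1 : 1 <= n0%:Z by rewrite lez_nat.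
by move=> low_eq0; rewrite low_eq0 in low_le; nia.
Qed.

Lemma lowest_degree_eqN1 (k0 : int) (k : seq int) (n0 : nat) (n : seq nat) :
  path <%R k0 k -> (0 < n0)%N ->
  lowest_degree (k0 :: k) (n0 :: n) = -1 <-> k0 = -1 /\ n0 = 1%N.
Proof.
move=> k_path n0_gt0; split=> [low_eqN1|[k0E n0E]]; last first.
  by rewrite lowest_degree_path // k0E ?n0E.
have k0_lt0 : k0 < 0.
  rewrite ltNge; apply/negP => /(@lowest_degree_eq0 k0 k n0 n k_path n0_gt0).
  by rewrite low_eqN1.
have := lowest_degree_cons_le k0 k n0 n; rewrite low_eqN1 (min_l (ltW k0_lt0)).
have n0_ge1 : 1 <= n0%:Z by rewrite lez_nat.
nia.
Qed.

Lemma path_last_ge (x : int) (s : seq int) :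
  path <%R x s -> x + (size s)%:Z <= last x s.
Proof.
elim: s x => [|y s IH] x /=; first by rewrite addr0.
case/andP=> x_lt_y /IH; lia.
Qed.

Lemma path_last_eq0 (k0 : int) (k : seq int) : path <%R k0 k -> 0 <= k0 ->
  last 0 (k0 :: k) = 0 <-> k0 :: k = [:: 0].
Proof.
move=> /path_last_ge last_ge k0_ge0; split=> [|-> //] /=.
case: k => [|y k] /= in last_ge *; first by move=> ->.
lia.
Qed.

Lemma path_last_eq1 (k0 : int) (k : seq int) : path <%R k0 k -> 0 <= k0 ->
  last 0 (k0 :: k) = 1 <-> k0 :: k = [:: 0; 1] \/ k0 :: k = [:: 1].
Proof.
move=> /path_last_ge last_ge k0_ge0; split=> [|[]-> //] /=.
case: k => [|y [|z k]] /= in last_ge *; first by move=> ->; right.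
  by move=> y1; left; congr [:: _; _]; lia.
lia.
Qed.

Theorem lemma3p6 (k : seq int) (n : seq nat)
  (hm : (0 < size k)%N) (hsz : size n = size k)
  (hk : sorted <%R k) (hn : all (fun x => 0 < x)%N n) :
  ((has_depth (dimLam k n) 1 <-> (k`_0 = -1 /\ nth 0%N n 0 = 1%N))
   /\ (has_depth (dimLam k n) 1 -> has_depth (dimW k n) (last 0 k + 1)))
  /\
  ((has_depth (dimLam k n) 0 <-> 0 <= k`_0)
   /\ (has_depth (dimLam k n) 0 ->
        (has_depth (dimW k n) 0 <-> k = [:: 0])
        /\ (has_depth (dimW k n) 1 <-> (k = [:: 0; 1] \/ k = [:: 1])))).
Proof.
have depthW dL d := @has_depth_dimW k n dL d hm hsz hn hk.
case: k hm hsz hk depthW => [//|k0 k] _ + k_path.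
case: n hn => [//|n0 n] /= /andP [n0_gt0 _] _ depthW.
split; split.
- by rewrite has_depth_dimLam; exact: lowest_degree_eqN1.
- by move=> /depthW ->.
- by rewrite has_depth_dimLam oppr0; exact: lowest_degree_eq0.
- move=> /[dup] /depthW depthW0 /has_depth_dimLam; rewrite oppr0.
  move=> /(lowest_degree_eq0 _ _ _ _ k_path n0_gt0) k0_ge0.
  by rewrite !depthW0 !addr0 path_last_eq0 // path_last_eq1.
Qed.
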